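(* Let $0\le r\le n/2$, let $B = B(n,r)=\{x\in\{0,1\}^n : |x|\le r\}$, and let $A$ be the adjacency matrix of the subgraph of the Hamming cube induced by $B$. For $y \in B$, let $S^{(B)}_y$ be the space of real functions $f$ on $B$ such that $f(x)$ depends only on the pair of Hamming distances $(|x|, |x-y|)$. Then $S^{(B)}_y$ is an invariant subspace of $A$.
   Context: $\{0,1\}^n$ is the Hamming cube (vertices adjacent iff Hamming distance $1$), $|x-y|$ the Hamming distance and $|x|=|x-0|$. *)

From HB Require Import structures.
From mathcomp Require Import all_boot all_order all_algebra.
From mathcomp Require Import reals.
Set Implicit Arguments. Unset Strict Implicit. Unset Printing Implicit Defensive.
Import Order.TTheory GRing.Theory Num.Theory.
Local Open Scope ring_scope.

Definition cube (n : nat) := {ffun 'I_n -> bool}.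

Definition hdist (n : nat) (x y : cube n) : nat := #|[set i | x i != y i]|.

Definition hwt (n : nat) (x : cube n) : nat := hdist x [ffun => false].

Definition ball (n r : nat) := {x : cube n | (hwt x <= r)%N}.

Definition adj_op (R : realType) (n r : nat) (f : ball n r -> R) : ball n r -> R :=
  fun x => \sum_(z : ball n r | hdist (val x) (val z) == 1%N) f z.

Definition in_Sy (R : realType) (n r : nat) (y : ball n r) (f : ball n r -> R) : Prop :=
  forall x1 x2 : ball n r,
    hwt (val x1) = hwt (val x2) ->
    hdist (val x1) (val y) = hdist (val x2) (val y) -> f x1 = f x2.

From HB Require Import structures.
From mathcomp Require Import all_boot all_order all_algebra.
From mathcomp Require Import reals.
From mathcomp Require Import all_fingroup zify.

Set Implicit Arguments. Unset Strict Implicit. Unset Printing Implicit Defensive.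

(* Permuting coordinates is an automorphism of the cube that preserves the
   weight, hence the ball B(n,r), and adjacency. If (|x1|, |x1-y|) and
   (|x2|, |x2-y|) agree, then so do the numbers of coordinates i with
   (x1_i, y_i) = (p, q), for every pair of bits (p, q); hence some coordinate
   permutation fixes y and sends x2 to x1. This permutation carries the
   neighbours of x2 in B onto those of x1 without changing the values of an
   f in S_y, so (A f)(x1) = (A f)(x2). *)

Section PairCounts.

Variables (I : finType) (a b : pred I).

Let c p q := #|[set i | (a i, b i) == (p, q)]|.

Lemma card_set_sum (P : pred I) : #|[set i | P i]| = \sum_i P i.
Proof. by rewrite -sum1dep_card big_mkcond; apply: eq_bigr => i _; case: (P i). Qed.

Lemma card_pair_counts :
  [/\ #|[set i | a i]| = c true true + c true false,
      #|[set i | b i]| = c true true + c false true,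
      #|[set i | a i != b i]| = c true false + c false true &
      #|[set i : I | true]| = c true true + c true false + c false true + c false false].
Proof.
by rewrite /c !card_set_sum -!big_split; split; apply: eq_bigr => i _;
  case: (a i); case: (b i).
Qed.

End PairCounts.

Lemma card_pair_fibers_eq (I : finType) (a1 a2 b : pred I) :
  #|[set i | a1 i]| = #|[set i | a2 i]| ->
  #|[set i | a1 i != b i]| = #|[set i | a2 i != b i]| ->
  forall t, #|[set i | (a1 i, b i) == t]| = #|[set i | (a2 i, b i) == t]|.
Proof.
move=> eq_a eq_ab [p q].
have [a1E b1E ab1E I1E] := card_pair_counts a1 b.
have [a2E b2E ab2E I2E] := card_pair_counts a2 b.
by case: p; case: q; lia.
Qed.

Lemma perm_of_card_fibers_eq n (T : eqType) (u v : 'I_n -> T) :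
  (forall t, #|[set i | u i == t]| = #|[set i | v i == t]|) ->
  exists s : 'S_n, forall i, u i = v (s i).
Proof.
move=> fibers_eq.
have count_fiber (w : 'I_n -> T) t :
    count_mem t [tuple w i | i < n] = #|[set i | w i == t]|.
  rewrite -sum1_count big_tuple -sum1dep_card.
  by apply: eq_bigl => i; rewrite tnth_mktuple.
have /tuple_permP[s uvs] : perm_eq [tuple u i | i < n] [tuple v i | i < n].
  by apply/allP => t _; rewrite /= !count_fiber fibers_eq.
exists s => i.
by have := congr1 (fun t => tnth t i) (val_inj uvs); rewrite /= !tnth_mktuple.
Qed.

Section CubePerm.

Variable n : nat.
Implicit Types (s : 'S_n) (x y : cube n).

Definition cube_perm s x : cube n := [ffun i => x (s i)].

Lemma cube_perm_inj s : injective (cube_perm s).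
Proof.
move=> x1 x2 /ffunP eq12; apply/ffunP => i.
by have := eq12 (s^-1 i)%g; rewrite !ffunE permKV.
Qed.

Lemma hdist_perm s x y : hdist (cube_perm s x) (cube_perm s y) = hdist x y.
Proof.
rewrite /hdist -(card_preimset [set i | x i != y i] (@perm_inj _ s)).
by apply: eq_card => i; rewrite !inE !ffunE.
Qed.

Lemma hwt_perm s x : hwt (cube_perm s x) = hwt x.
Proof.
have perm0 : cube_perm s [ffun => false] = [ffun => false].
  by apply/ffunP => i; rewrite !ffunE.
by rewrite /hwt -{1}perm0 hdist_perm.
Qed.

Lemma hwtE x : hwt x = #|[set i | x i]|.
Proof. by apply: eq_card => i; rewrite !inE ffunE; case: (x i). Qed.

Lemma cube_perm_transitive x1 x2 y :
  hwt x1 = hwt x2 -> hdist x1 y = hdist x2 y ->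
  exists s, cube_perm s x2 = x1 /\ cube_perm s y = y.
Proof.
rewrite !hwtE => eq_wt eq_dist.
have /perm_of_card_fibers_eq[s x1y_s] := card_pair_fibers_eq eq_wt eq_dist.
by exists s; split; apply/ffunP => i; rewrite ffunE; case: (x1y_s i).
Qed.

End CubePerm.

Section BallPerm.

Variables (R : realType) (n r : nat).
Implicit Types (s : 'S_n) (x : ball n r) (f : ball n r -> R).

Fact ball_perm_subproof s x : (hwt (cube_perm s (val x)) <= r)%N.
Proof. by rewrite hwt_perm; exact: (valP x). Qed.

Definition ball_perm s x : ball n r :=
  Sub (cube_perm s (val x)) (ball_perm_subproof s x).

Lemma val_ball_perm s x : val (ball_perm s x) = cube_perm s (val x).
Proof. exact: SubK. Qed.

Lemma ball_perm_inj s : injective (ball_perm s).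
Proof. by move=> x1 x2 /(congr1 val); rewrite !val_ball_perm => /cube_perm_inj/val_inj. Qed.

Lemma adj_op_perm f s x : adj_op f (ball_perm s x) = adj_op (f \o ball_perm s) x.
Proof.
rewrite /adj_op (reindex_inj (@ball_perm_inj s)).
by apply: eq_bigl => z; rewrite !val_ball_perm hdist_perm.
Qed.

Lemma in_Sy_perm_invariant y f s :
  in_Sy y f -> cube_perm s (val y) = val y -> f \o ball_perm s =1 f.
Proof.
move=> f_Sy s_y z /=; apply: f_Sy; rewrite val_ball_perm ?hwt_perm //.
by rewrite -[in LHS]s_y hdist_perm.
Qed.

End BallPerm.

Theorem lemma2p1 (R : realType) (n r : nat) (hr : (2 * r <= n)%N) (y : ball n r) :
  forall f : ball n r -> R, in_Sy y f -> in_Sy y (adj_op f).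
Proof.
move=> f f_Sy x1 x2 eq_wt eq_dist.
have [s [s_x2 s_y]] := cube_perm_transitive eq_wt eq_dist.
have -> : x1 = ball_perm s x2 by apply: val_inj; rewrite val_ball_perm.
rewrite adj_op_perm; apply: eq_bigr => z _.
exact: (in_Sy_perm_invariant f_Sy s_y).
Qed.
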